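(* For a single-cell region ($n_x=n_y=n_z=1$) formed by the primary cell with corners $(i,j,k)$ and $(i+1,j+1,k+1)$, carrying potential values $U_{i+a,j+b,k+c}$, $a,b,c\in\{0,1\}$, at its eight nodes, let $$\Delta t^{(i,j,k)}_{\mathrm{CFL}}=\frac{2}{\frac{2\hbar}{m}\left(\frac{1}{(\Delta x)^2}+\frac{1}{(\Delta y)^2}+\frac{1}{(\Delta z)^2}\right)+\frac{1}{\hbar}\max_{a,b,c\in\{0,1\}}|U_{i+a,j+b,k+c}|}$$ and let $\Delta t^{(i,j,k)}_{\mathrm{CFL,gen}}$ be the generalized CFL limit of this single-cell region. Then $\Delta t^{(i,j,k)}_{\mathrm{CFL}}\le\Delta t^{(i,j,k)}_{\mathrm{CFL,gen}}$.
   Context: Fix constants $\hbar>0$, $m>0$, cell sizes $\Delta x,\Delta y,\Delta z>0$. For a single-cell region (one primary cell of size $\Delta x\times\Delta y\times\Delta z$, local nodes $(a+1,b+1,c+1)$, $a,b,c\in\{0,1\}$, ordered by $(a+1)+2b+4c$), let $D_U$ be the $8\times8$ diagonal matrix of the node potentials. Let $I_p$ be the $p\times p$ identity, $W_1=[-1\ \ 1]$, $\otimes$ the Kronecker product. Define $D_V''=\frac{\Delta x\Delta y\Delta z}{8}I_8$; $D=-[I_2\otimes I_2\otimes W_1^T\ \ I_2\otimes W_1^T\otimes I_2\ \ W_1^T\otimes I_2\otimes I_2]$; $D_S''=\mathrm{diag}(\frac{\Delta y\Delta z}{4}I_4,\frac{\Delta x\Delta z}{4}I_4,\frac{\Delta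 x\Delta y}{4}I_4)$; $D_l'=\mathrm{diag}(\Delta x I_4,\Delta y I_4,\Delta z I_4)$; $H=\frac{\hbar^2}{2m}D D_S''(D_l')^{-1}D^T+D_V''D_U$. The generalized CFL limit is $\Delta t_{\mathrm{CFL,gen}}=2/\rho\!\left(\frac{1}{\hbar}(D_V'')^{-1/2}H(D_V'')^{-1/2}\right)$, with $\rho$ the spectral radius. *)

From HB Require Import structures.
From mathcomp Require Import all_boot all_order all_algebra.
From mathcomp Require Import classical_sets boolp reals.
From mathcomp Require Import complex mxtens.
Set Implicit Arguments. Unset Strict Implicit. Unset Printing Implicit Defensive.
Import Order.TTheory GRing.Theory Num.Theory.
Local Open Scope ring_scope.

Definition spectral_radius (R : realType) (n : nat) (A : 'M[R]_n) : R :=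
  sup [set r : R | exists z : R[i],
         eigenvalue (map_mx (fun x : R => (x%:C)%C) A) z /\ ComplexField.Normc.normc z = r].

Section SingleCell.
Variable R : realType.

Definition W1 : 'M[R]_(1, 2) := \row_(j < 2) (if j == 0 then -1 else 1).

Definition Dmat : 'M[R]_(8, 4 + 4 + 4) :=
  - row_mx (row_mx
      ((1%:M : 'M[R]_2) *t (1%:M : 'M[R]_2) *t W1^T : 'M[R]_(8, 4))
      ((1%:M : 'M[R]_2) *t W1^T *t (1%:M : 'M[R]_2) : 'M[R]_(8, 4)))
      (W1^T *t (1%:M : 'M[R]_2) *t (1%:M : 'M[R]_2) : 'M[R]_(8, 4)).

Definition diag3 (a b c : R) : 'M[R]_(4 + 4 + 4) :=
  block_mx (block_mx (a%:M) 0 0 (b%:M)) 0 0 (c%:M).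

Definition DS2 (dx dy dz : R) := diag3 (dy * dz / 4) (dx * dz / 4) (dx * dy / 4).
Definition Dl1 (dx dy dz : R) := diag3 dx dy dz.
Definition DV2 (dx dy dz : R) : 'M[R]_8 := (dx * dy * dz / 8)%:M.

(* local node index (a,b,c) |-> a + 2b + 4c (0-based version of (a+1)+2b+4c) *)
Definition node_a (p : 'I_8) : 'I_2 := inord (p %% 2).
Definition node_b (p : 'I_8) : 'I_2 := inord ((p %/ 2) %% 2).
Definition node_c (p : 'I_8) : 'I_2 := inord (p %/ 4).

Definition DU (U : 'I_2 -> 'I_2 -> 'I_2 -> R) : 'M[R]_8 :=
  \matrix_(p, q) (if p == q then U (node_a p) (node_b p) (node_c p) else 0).

Definition Hmat (hbar m dx dy dz : R) (U : 'I_2 -> 'I_2 -> 'I_2 -> R) : 'M[R]_8 :=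
  (hbar ^+ 2 / (2 * m)) *: (Dmat *m DS2 dx dy dz *m invmx (Dl1 dx dy dz) *m Dmat^T)
  + DV2 dx dy dz *m DU U.

Definition DV2_invsqrt (dx dy dz : R) : 'M[R]_8 :=
  ((Num.sqrt (dx * dy * dz / 8))^-1)%:M.

Definition dt_CFL_gen (hbar m dx dy dz : R) (U : 'I_2 -> 'I_2 -> 'I_2 -> R) : R :=
  2 / spectral_radius
        (hbar^-1 *: (DV2_invsqrt dx dy dz *m Hmat hbar m dx dy dz U *m DV2_invsqrt dx dy dz)).

Definition maxU (U : 'I_2 -> 'I_2 -> 'I_2 -> R) : R :=
  \big[Num.max/0]_(a < 2) \big[Num.max/0]_(b < 2) \big[Num.max/0]_(c < 2) `|U a b c|.

Definition dt_CFL (hbar m dx dy dz : R) (U : 'I_2 -> 'I_2 -> 'I_2 -> R) : R :=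
  2 / ((2 * hbar / m) * (dx ^- 2 + dy ^- 2 + dz ^- 2) + hbar^-1 * maxU U).

End SingleCell.

From HB Require Import structures.
From mathcomp Require Import all_boot all_order all_algebra.
From mathcomp Require Import classical_sets boolp reals.
From mathcomp Require Import complex mxtens.
From mathcomp Require Import ring.
Set Implicit Arguments. Unset Strict Implicit. Unset Printing Implicit Defensive.
Import Order.TTheory GRing.Theory Num.Theory.
Local Open Scope ring_scope.

(* After conjugation by the scalar matrix (D_V'')^{-1/2}, the matrix whose
   spectral radius defines the generalized limit is (hbar/m) L + hbar^{-1} D_U,
   where L = dx^{-2} L_x + dy^{-2} L_y + dz^{-2} L_z and each L_k is a Kronecker
   product of two copies of I_2 with the edge Laplacian W1^T W1 = [[1,-1],[-1,1]].
   Every column of L_k has absolute sum 2, so Gershgorin's theorem in column form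
   bounds the spectral radius by the denominator of dt_CFL.  The radius is also
   positive: the matrix is real symmetric and nonzero, while a real symmetric
   matrix whose eigenvalues all vanish is nilpotent, hence zero. *)

Local Notation normc := ComplexField.Normc.normc.

Lemma tens3_mulmx_tr (R : comPzRingType) m1 n1 m2 n2 m3 n3
    (A : 'M[R]_(m1, n1)) (B : 'M[R]_(m2, n2)) (C : 'M[R]_(m3, n3)) A' B' C' :
  A *m A^T = A' -> B *m B^T = B' -> C *m C^T = C' ->
  (A *t B *t C) *m (A *t B *t C)^T = A' *t B' *t C'.
Proof. by move=> <- <- <-; rewrite !trmx_tens !tensmx_mul. Qed.

Section ColumnNorm.
Variable R : numDomainType.

Definition col_norm m n (A : 'M[R]_(m, n)) (j : 'I_n) : R := \sum_i `|A i j|.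

Lemma col_normD_le m n (A B : 'M[R]_(m, n)) j :
  col_norm (A + B) j <= col_norm A j + col_norm B j.
Proof.
by rewrite /col_norm -big_split ler_sum // => i _; rewrite mxE ler_normD.
Qed.

Lemma col_normZ m n a (A : 'M[R]_(m, n)) j : col_norm (a *: A) j = `|a| * col_norm A j.
Proof. by rewrite /col_norm mulr_sumr; apply: eq_bigr => i _; rewrite mxE normrM. Qed.

Lemma col_norm1 n (j : 'I_n) : col_norm (1%:M : 'M[R]_n) j = 1.
Proof.
rewrite /col_norm (bigD1 j) //= big1 => [|i /negbTE neq_ij].
  by rewrite mxE eqxx normr1 addr0.
by rewrite mxE neq_ij normr0.
Qed.

Lemma col_norm_tens m n p q (A : 'M[R]_(m, n)) (B : 'M[R]_(p, q)) j :
  col_norm (A *t B) j =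
  col_norm A (mxtens_unindex j).1 * col_norm B (mxtens_unindex j).2.
Proof.
rewrite /col_norm mulr_sum; apply: eq_bigr => i _.
by rewrite mxE normrM.
Qed.

End ColumnNorm.

Section SymmetricNilpotent.
Variable R : realDomainType.

Lemma sym_mx_sqr_eq0 n (S : 'M[R]_n) : S^T = S -> S *m S = 0 -> S = 0.
Proof.
move=> symS SS0; apply/matrixP => i j; rewrite mxE.
have : \sum_k S i k ^+ 2 = 0.
  have := congr1 (fun M : 'M[R]_n => M i i) SS0; rewrite !mxE => SSii.
  rewrite -[RHS]SSii; apply: eq_bigr => k _.
  by rewrite expr2 -{2}symS mxE.
move/psumr_eq0P => /(_ (fun k _ => sqr_ge0 _) j isT) /eqP.
by rewrite sqrf_eq0 => /eqP.
Qed.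

Lemma trmx_sym_exp n (A : 'M[R]_n) k : A^T = A -> (A ^+ k)^T = A ^+ k.
Proof.
move=> symA; elim: k => [|k IH]; first by rewrite expr0 trmx1.
by rewrite exprS -mulmxE trmx_mul IH symA mulmxE -exprSr exprS.
Qed.

Lemma sym_nilpotent_eq0 n (A : 'M[R]_n) k : A^T = A -> A ^+ k = 0 -> A = 0.
Proof.
move=> symA Ak0.
have A2k0 : A ^+ (2 ^ k) = 0.
  by rewrite -(subnK (ltnW (ltn_expl k (ltnSn 1)))) exprD Ak0 mulr0.
elim: k A2k0 {Ak0} => [|k IH A2k0]; first by rewrite expn0 expr1.
apply: IH; apply: sym_mx_sqr_eq0; first exact: trmx_sym_exp.
by rewrite mulmxE -exprD addnn -mul2n -expnS.
Qed.

End SymmetricNilpotent.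

Lemma nilpotent_of_eigenvalues0 (F : closedFieldType) n (B : 'M[F]_n.+1) :
  (forall z, eigenvalue B z -> z = 0) -> B ^+ n.+1 = 0.
Proof.
move=> eig0; have [r def_char] := closed_field_poly_normal (char_poly B).
rewrite (monicP (char_poly_monic _)) scale1r in def_char.
have rootsX : \prod_(z <- r) ('X - z%:P) = \prod_(z <- r) 'X.
  apply: eq_big_seq => z zr; rewrite (eig0 z) ?subr0 //.
  by rewrite eigenvalue_root_char def_char root_prod_XsubC.
rewrite rootsX big_const_seq count_predT iter_mulr_1 in def_char.
have size_r : size r = n.+1.
  by have := size_char_poly B; rewrite def_char size_polyXn => -[].
by have := Cayley_Hamilton B; rewrite def_char size_r rmorphXn /= horner_mx_X.
Qed.

Section ComplexSpectrum.
Variable R : rcfType.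

Lemma normr_normc (z : R[i]) : `|z| = (normc z)%:C%C.
Proof. by case: z => a b; rewrite normc_def. Qed.

Lemma normr_real_complex (x : R) : `|x%:C%C| = `|x|%:C%C.
Proof. by rewrite normc_def /= expr0n /= addr0 sqrtr_sqr. Qed.

Lemma normc_ge0 (z : R[i]) : 0 <= normc z.
Proof. by case: z => a b; apply: sqrtr_ge0. Qed.

Lemma normc_gt0 (z : R[i]) : z != 0 -> 0 < normc z.
Proof.
move=> nz; rewrite lt_neqAle normc_ge0 andbT eq_sym.
by apply: contra nz => /eqP /ComplexField.Normc.eq0_normc ->.
Qed.

Lemma eigenvalue_normc_le n (A : 'M[R]_n.+1) M z :
  (forall j, col_norm A j <= M) ->
  eigenvalue (map_mx (fun x : R => x%:C%C) A) z -> normc z <= M.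
Proof.
move=> colA /eigenvalueP [v vA nz_v].
have [j _ vj_max] := @arg_maxP _ _ _ ord0 xpredT (fun i => normc (v 0 i)) isT.
have vj_ge (i : 'I_n.+1) : `|v 0 i| <= `|v 0 j|.
  by rewrite !normr_normc lecR; apply: vj_max.
have vj_gt0 : 0 < `|v 0 j|.
  rewrite normr_gt0; apply: contra nz_v => /eqP vj0; apply/eqP/matrixP => a i.
  by rewrite ord1 !mxE; apply/eqP; rewrite -normr_le0 (le_trans (vj_ge i)) // vj0 normr0.
have zvj : z * v 0 j = \sum_i v 0 i * (A i j)%:C%C.
  have := congr1 (fun M : 'rV[R[i]]_n.+1 => M 0 j) vA; rewrite !mxE => <-.
  by apply: eq_bigr => i _; rewrite mxE.
have : `|z| * `|v 0 j| <= `|v 0 j| * M%:C%C.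
  rewrite -normrM zvj; apply: (le_trans (ler_norm_sum _ _ _)).
  apply: (@le_trans _ _ (\sum_i `|v 0 j| * `|A i j|%:C%C)).
    apply: ler_sum => i _; rewrite normrM normr_real_complex ler_wpM2r //.
    by rewrite -normr_real_complex.
  by rewrite -mulr_sumr ler_wpM2l // -rmorph_sum lecR; apply: colA.
by rewrite mulrC ler_pM2l // normr_normc lecR.
Qed.

Lemma sym_mx_nonzero_eigenvalue n (A : 'M[R]_n.+1) :
  A^T = A -> A != 0 ->
  exists2 z, eigenvalue (map_mx (fun x : R => x%:C%C) A) z & z != 0.
Proof.
move=> symA nzA; apply: contrapT => no_nz_eig.
have : map_mx (fun x : R => x%:C%C) A ^+ n.+1 = 0.
  apply: nilpotent_of_eigenvalues0 => z eig_z; apply: contrapT => nz.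
  by apply: no_nz_eig; exists z => //; apply/eqP.
rewrite -(rmorphXn (@map_mx _ _ (real_complex R) n.+1 n.+1)) => /eqP.
by rewrite map_mx_eq0 => /eqP /(sym_nilpotent_eq0 symA) A0; rewrite A0 eqxx in nzA.
Qed.

End ComplexSpectrum.

Lemma spectral_radius_bounds (R : realType) n (A : 'M[R]_n.+1) M :
  A^T = A -> A != 0 -> (forall j, col_norm A j <= M) ->
  0 < spectral_radius A <= M.
Proof.
move=> symA nzA colA; rewrite /spectral_radius; set S := (X in sup X).
have [z eig_z nz] := sym_mx_nonzero_eigenvalue symA nzA.
have Sz : S (normc z) by exists z.
have S_ub : ubound S M by move=> _ [w [eig_w <-]]; exact: eigenvalue_normc_le eig_w.
apply/andP; split; last by apply: ge_sup S_ub; exists (normc z).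
apply: lt_le_trans (normc_gt0 nz) (sup_upper_bound _ Sz).
by split; [exists (normc z) | exists M].
Qed.

Section SingleCellHamiltonian.
Variable R : realType.
Implicit Types (hbar m dx dy dz a b c : R) (U : 'I_2 -> 'I_2 -> 'I_2 -> R).

Definition edge_laplacian : 'M[R]_2 := (W1 R)^T *m W1 R.

Definition laplacian_x : 'M[R]_(2 * 2 * 2) := 1%:M *t 1%:M *t edge_laplacian.
Definition laplacian_y : 'M[R]_(2 * 2 * 2) := 1%:M *t edge_laplacian *t 1%:M.
Definition laplacian_z : 'M[R]_(2 * 2 * 2) := edge_laplacian *t 1%:M *t 1%:M.

Definition cell_laplacian dx dy dz : 'M[R]_8 :=
  dx^-2 *: laplacian_x + dy^-2 *: laplacian_y + dz^-2 *: laplacian_z.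

Definition scaled_hamiltonian hbar m dx dy dz U : 'M[R]_8 :=
  (hbar / m) *: cell_laplacian dx dy dz + hbar^-1 *: DU U.

Lemma edge_laplacian_sym : edge_laplacian^T = edge_laplacian.
Proof. by rewrite trmx_mul trmxK. Qed.

Lemma col_norm_edge_laplacian j : col_norm edge_laplacian j = 2.
Proof.
rewrite /col_norm !big_ord_recl big_ord0 !mxE !big_ord1 !mxE /=.
by case: j => [[|[|]]] //= _; rewrite ?mulN1r ?mulr1 ?mul1r ?opprK normrN normr1 addr0.
Qed.

Lemma col_norm_laplacian_x j : col_norm laplacian_x j = 2.
Proof. by rewrite !col_norm_tens !col_norm1 col_norm_edge_laplacian !mul1r. Qed.

Lemma col_norm_laplacian_y j : col_norm laplacian_y j = 2.
Proof. by rewrite !col_norm_tens !col_norm1 col_norm_edge_laplacian mulr1 mul1r. Qed.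

Lemma col_norm_laplacian_z j : col_norm laplacian_z j = 2.
Proof. by rewrite !col_norm_tens !col_norm1 col_norm_edge_laplacian !mulr1. Qed.

Lemma laplacian_x_sym : laplacian_x^T = laplacian_x.
Proof. by rewrite /laplacian_x !trmx_tens trmx1 edge_laplacian_sym. Qed.

Lemma laplacian_y_sym : laplacian_y^T = laplacian_y.
Proof. by rewrite /laplacian_y !trmx_tens trmx1 edge_laplacian_sym. Qed.

Lemma laplacian_z_sym : laplacian_z^T = laplacian_z.
Proof. by rewrite /laplacian_z !trmx_tens trmx1 edge_laplacian_sym. Qed.

Lemma cell_laplacian_sym dx dy dz : (cell_laplacian dx dy dz)^T = cell_laplacian dx dy dz.
Proof.
by rewrite !linearD !linearZ /= laplacian_x_sym laplacian_y_sym laplacian_z_sym.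
Qed.

Lemma diag3M a b c a' b' c' :
  diag3 a b c *m diag3 a' b' c' = diag3 (a * a') (b * b') (c * c').
Proof. by rewrite /diag3 !mulmx_block !(mulmx0, mul0mx, addr0, add0r) -!scalar_mxM. Qed.

Lemma invmx_diag3 a b c : a != 0 -> b != 0 -> c != 0 ->
  invmx (diag3 a b c) = diag3 a^-1 b^-1 c^-1.
Proof.
move=> a0 b0 c0; have unit_scalar x : x != 0 -> (x%:M : 'M[R]_4) \in unitmx.
  by move=> x0; rewrite unitmxE det_scalar unitrX // unitfE.
by rewrite /diag3 !invmx_block_diag ?invmx_scalar // !block_diag_mx_unit ?unit_scalar.
Qed.

Lemma Dmat_diag3_Dmat_tr a b c :
  Dmat R *m diag3 a b c *m (Dmat R)^T =
  a *: laplacian_x + b *: laplacian_y + c *: laplacian_z.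
Proof.
rewrite /Dmat /diag3 mulNmx raddfN /= mulmxN mulNmx opprK.
rewrite !mul_row_block !(mulmx0, mul0mx, addr0, add0r) !tr_row_mx !mul_row_col.
rewrite !mul_mx_scalar -!scalemxAl.
have id_gram : (1%:M : 'M[R]_2) *m 1%:M^T = 1%:M by rewrite trmx1 mulmx1.
have edge_gram : (W1 R)^T *m (W1 R)^T^T = edge_laplacian by rewrite trmxK.
congr (_ *: _ + _ *: _ + _ *: _).
- exact: (tens3_mulmx_tr id_gram id_gram edge_gram).
- exact: (tens3_mulmx_tr id_gram edge_gram id_gram).
- exact: (tens3_mulmx_tr edge_gram id_gram id_gram).
Qed.

Lemma scaled_hamiltonianE hbar m dx dy dz U :
  0 < hbar -> 0 < m -> 0 < dx -> 0 < dy -> 0 < dz ->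
  hbar^-1 *: (DV2_invsqrt dx dy dz *m Hmat hbar m dx dy dz U *m DV2_invsqrt dx dy dz)
  = scaled_hamiltonian hbar m dx dy dz U.
Proof.
move=> hbar_gt0 m_gt0 dx_gt0 dy_gt0 dz_gt0.
have vol_ge0 : 0 <= dx * dy * dz / 8 by rewrite !(mulr_ge0, invr_ge0) ?ltW.
rewrite /Hmat /DS2 /Dl1 invmx_diag3 ?gt_eqF // -(mulmxA (Dmat R)) diag3M.
rewrite Dmat_diag3_Dmat_tr /DV2_invsqrt /DV2 !mul_scalar_mx mul_mx_scalar.
rewrite !scalerA -mulrA -invfM -expr2 sqr_sqrtr //.
rewrite /scaled_hamiltonian /cell_laplacian !scalerDr !scalerA.
by congr (_ *: _ + _ *: _ + _ *: _ + _ *: _); field; rewrite ?gt_eqF.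
Qed.

Lemma maxU_ge U (a b c : 'I_2) : `|U a b c| <= maxU U.
Proof.
apply: le_trans (le_bigmax _ _ a); apply: le_trans (le_bigmax _ _ b).
exact: le_bigmax.
Qed.

Lemma col_norm_DU U j : col_norm (DU U) j = `|U (node_a j) (node_b j) (node_c j)|.
Proof.
rewrite /col_norm (bigD1 j) //= big1 => [|i /negbTE neq_ij].
  by rewrite mxE eqxx addr0.
by rewrite mxE neq_ij normr0.
Qed.

Lemma col_norm_cell_laplacian_le dx dy dz j :
  col_norm (cell_laplacian dx dy dz) j <= 2 * (dx ^- 2 + dy ^- 2 + dz ^- 2).
Proof.
apply: le_trans (col_normD_le _ _ _) _; rewrite col_normZ col_norm_laplacian_z.
apply: le_trans (lerD (col_normD_le _ _ _) (lexx _)) _.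
rewrite !col_normZ col_norm_laplacian_x col_norm_laplacian_y.
by rewrite !ger0_norm ?invr_ge0 ?sqr_ge0 // -!(mulrC 2) -!mulrDr.
Qed.

Lemma col_norm_scaled_hamiltonian_le hbar m dx dy dz U j :
  0 < hbar -> 0 < m ->
  col_norm (scaled_hamiltonian hbar m dx dy dz U) j <=
  (2 * hbar / m) * (dx ^- 2 + dy ^- 2 + dz ^- 2) + hbar^-1 * maxU U.
Proof.
move=> hbar_gt0 m_gt0; have hm_gt0 : 0 < hbar / m by rewrite divr_gt0.
have ihbar_gt0 : 0 < hbar^-1 by rewrite invr_gt0.
apply: le_trans (col_normD_le _ _ _) _.
rewrite !col_normZ col_norm_DU (gtr0_norm hm_gt0) (gtr0_norm ihbar_gt0).
apply: lerD; last by rewrite ler_pM2l ?maxU_ge.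
have -> : 2 * hbar / m = hbar / m * 2 by ring.
rewrite -mulrA ler_pM2l //; exact: col_norm_cell_laplacian_le.
Qed.

Lemma scaled_hamiltonian_sym hbar m dx dy dz U :
  (scaled_hamiltonian hbar m dx dy dz U)^T = scaled_hamiltonian hbar m dx dy dz U.
Proof.
rewrite /scaled_hamiltonian linearD !linearZ /= cell_laplacian_sym.
by congr (_ + _ *: _); apply/matrixP => i j; rewrite !mxE eq_sym; case: eqP => // ->.
Qed.

Lemma scaled_hamiltonian_neq0 hbar m dx dy dz U :
  0 < hbar -> 0 < m -> 0 < dx -> scaled_hamiltonian hbar m dx dy dz U != 0.
Proof.
(* The (0, 1) entry, between the two nodes of an x-edge, is -hbar/(m dx^2). *)
move=> hbar_gt0 m_gt0 dx_gt0; apply/eqP => /matrixP /(_ 0 1).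
rewrite !mxE !big_ord1 !mxE /= !(mulr0, mul0r, mulr1, mul1r, addr0).
by apply/eqP; rewrite mulrN1 mulrN oppr_eq0 !mulf_neq0 ?invr_neq0 ?expf_neq0 ?gt_eqF.
Qed.

End SingleCellHamiltonian.

Theorem lemma6 (R : realType) (hbar m dx dy dz : R)
  (hhbar : 0 < hbar) (hm : 0 < m) (hdx : 0 < dx) (hdy : 0 < dy) (hdz : 0 < dz)
  (U : 'I_2 -> 'I_2 -> 'I_2 -> R) :
  dt_CFL hbar m dx dy dz U <= dt_CFL_gen hbar m dx dy dz U.
Proof.
rewrite /dt_CFL /dt_CFL_gen scaled_hamiltonianE //.
have /andP [rho_gt0 rho_le] :=
  spectral_radius_bounds (scaled_hamiltonian_sym _ _ _ _ _ U)
  (scaled_hamiltonian_neq0 dy dz U hhbar hm hdx)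
  (fun j => col_norm_scaled_hamiltonian_le dx dy dz U j hhbar hm).
by rewrite ler_pM2l // lef_pV2 ?posrE // (lt_le_trans rho_gt0).
Qed.
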